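(* Let $m\ge 1$ and $n\ge m$. Let $\mathcal{A}$ be any deterministic adaptive procedure that makes at most $2^m-2$ oracle queries, each query being a string $\mathbf{y}\in\{0,1\}^m$ answered by whether $\mathbf{y}\in C(f)$. Then there exist fully balanced functions $f,g:\{0,1\}^n\to\{0,1\}^m$ with $\dim\operatorname{img}(f)=m$ and $\dim\operatorname{img}(g)=m-1$ such that $\mathcal{A}$ makes the same queries and receives the same answers on $f$ as on $g$. In particular, no such procedure distinguishes the cases $r=m-1$ and $r=m$ with certainty using fewer than $2^m-1$ queries.
   Context: Strings in $\{0,1\}^k$ are identified with vectors of $\mathbb{F}_2^k$; $\mathbf{a}\cdot\mathbf{b}=\bigoplus_i a_ib_i$ (mod 2). $f$ is $\mathbf{y}$-balanced if $f(\mathbf{x})\cdot\mathbf{y}=0$ for exactly half of the $\mathbf{x}$ and $=1$ for the other half, and $\mathbf{y}$-constant if $f(\mathbf{x})\cdot\mathbf{y}$ is the same for all $\mathbf{x}$. $f$ is fully balanced if for every $\mathbf{y}$ it is $\mathbf{y}$-balanced or $\mathbf{y}$-constant; then $\operatorname{img}(f)$ is an affine subspace, and $r$ denotes its dimension. $C(f)=\{\mathbf{y}: f\text{ is }\mathbf{y}\text{-constant}\}$. A query corresponds to one run of the Generalised Phase Kick-Back algorithm with marker $\mathbf{y}$, whose output is $\mathbf{0}$ exactly when $f$ is $\mathbf{y}$-constant (for fully balanced $f$); a marker selection algorithm only uses whether this output is $\mathbf{0}$. *)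

From HB Require Import structures.
From mathcomp Require Import all_boot all_order all_algebra.
Set Implicit Arguments. Unset Strict Implicit. Unset Printing Implicit Defensive.
Import GRing.Theory.
Local Open Scope ring_scope.

Notation bv k := 'rV['F_2]_k.

Definition dotv (k : nat) (a b : bv k) : 'F_2 := (a *m b^T) 0 0.

Section Defs.
Variables (n m : nat).
Implicit Type f : bv n -> bv m.

Definition ybalanced f (y : bv m) : Prop :=
  #|[set x : bv n | dotv (f x) y == 0]| = #|[set x : bv n | dotv (f x) y == 1]|.

Definition yconstant f (y : bv m) : bool :=
  [exists c : 'F_2, [forall x : bv n, dotv (f x) y == c]].

Definition fully_balanced f : Prop :=
  forall y : bv m, ybalanced f y \/ yconstant f y.

Definition Cset f : {set bv m} := [set y | yconstant f y].

(* dimension of the affine hull of img(f) (= dim img(f) when img(f) is an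
   affine subspace): rank of the span of the differences f x - f 0. *)
Definition dim_img f : nat :=
  \rank (\matrix_(i < #|{: bv n}|) (f (enum_val i) - f 0)).
End Defs.

(* A deterministic adaptive procedure: the next query is a function of the
   history of (query, answer) pairs so far.  [transcript q O k] is the list
   of the first k (query, answer) pairs when interacting with oracle O. *)
Fixpoint transcript (m : nat) (q : seq (bv m * bool) -> bv m)
  (O : bv m -> bool) (k : nat) : seq (bv m * bool) :=
  match k with
  | 0 => [::]
  | k'.+1 => let h := transcript q O k' in
             let y := q h in rcons h (y, O y)
  end.

From mathcomp Require Import all_boot all_order all_algebra zify.
Set Implicit Arguments. Unset Strict Implicit. Unset Printing Implicit Defensive.
Import GRing.Theory.
Local Open Scope ring_scope.

(* Take f x = x B with B the projection onto the first m coordinates, so that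
   C(f) = {0}.  At most 2^m - 2 queries leave some nonzero y0 unqueried; let g
   be f followed by a linear map with kernel {0, y0}, so that C(g) = {0, y0}
   and dim img g = m - 1.  Linear maps over F_2 are fully balanced, and the
   oracles y \in C(f) and y \in C(g) differ only at y0, which is never asked. *)

Lemma F2_eq0Veq1 (a : 'F_2) : (a == 0) || (a == 1).
Proof. by case: a => [[|[|]]]. Qed.

Lemma F2_neq0 (a : 'F_2) : a != 0 -> a = 1.
Proof. by case/orP: (F2_eq0Veq1 a) => /eqP ->; rewrite ?eqxx. Qed.

Lemma mx_F2_neq0 p r (A : 'M['F_2]_(p, r)) : A != 0 -> exists i j, A i j = 1.
Proof.
move=> /eqP A_neq0; case: (pickP (fun ij : 'I_p * 'I_r => A ij.1 ij.2 != 0)).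
  by move=> [i j] /F2_neq0 Aij; exists i, j.
move=> A0; case: A_neq0; apply/matrixP => i j.
by rewrite mxE; apply/eqP/negbFE/(A0 (i, j)).
Qed.

Section LinearMaps.
Variables (n m : nat) (A : 'M['F_2]_(n, m)).

Lemma dotv_mulmxr (x : bv n) (y : bv m) :
  dotv (mulmxr A x) y = (x *m (A *m y^T)) 0 0.
Proof. by rewrite /dotv mulmxA. Qed.

Lemma yconstant_mulmxr (y : bv m) : yconstant (mulmxr A) y = (A *m y^T == 0).
Proof.
have [v0|/mx_F2_neq0 [j [i vj]]] := eqVneq (A *m y^T) 0.
  by apply/existsP; exists 0; apply/forallP => x; rewrite dotv_mulmxr v0 mulmx0 mxE.
apply/negbTE/existsP => -[c /forallP dotc].
move: (dotc 0) (dotc (delta_mx 0 j)); rewrite !dotv_mulmxr mul0mx mxE -rowE mxE.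
by rewrite (ord1 i) in vj; rewrite vj => /eqP <- /eqP.
Qed.

Lemma Cset_mulmxr (y : bv m) : (y \in Cset (mulmxr A)) = (A *m y^T == 0).
Proof. by rewrite inE yconstant_mulmxr. Qed.

(* Translating by a basis vector on which y . (x A) depends flips its value. *)
Lemma fully_balanced_mulmxr : fully_balanced (mulmxr A).
Proof.
move=> y; have [v0|/mx_F2_neq0 [j [i vj]]] := eqVneq (A *m y^T) 0.
  by right; rewrite yconstant_mulmxr v0.
left; rewrite /ybalanced (ord1 i) in vj *; pose e : bv n := delta_mx 0 j.
have dot_shift x (s : 'F_2) :
    dotv (mulmxr A (x + s *: e)) y = dotv (mulmxr A x) y + s.
  by rewrite !dotv_mulmxr mulmxDl -scalemxAl -rowE [LHS]mxE [in X in _ + X]mxE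
    [in X in _ * X]mxE vj mulr1.
apply/eqP; rewrite eqn_leq; apply/andP; split.
  rewrite -(card_imset _ (addIr (1 *: e))).
  apply/subset_leq_card/subsetP => _ /imsetP[x + ->].
  by rewrite !inE dot_shift => /eqP ->; rewrite add0r.
rewrite -(card_imset _ (addIr ((-1) *: e))).
apply/subset_leq_card/subsetP => _ /imsetP[x + ->].
by rewrite !inE dot_shift => /eqP ->; rewrite subrr.
Qed.

Lemma dim_img_mulmxr : dim_img (mulmxr A) = \rank A.
Proof.
rewrite /dim_img; set E := \matrix_(i < #|{: bv n}|) (enum_val i : bv n).
have -> : \matrix_(i < #|{: bv n}|) (mulmxr A (enum_val i) - mulmxr A 0) = E *m A.
  by apply/row_matrixP => i; rewrite row_mul !rowK /= mul0mx subr0.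
have E_full : (1%:M <= E)%MS.
  apply/row_subP => i; rewrite row1.
  by have := row_sub (enum_rank (delta_mx 0 i : bv n)) E; rewrite rowK enum_rankK.
apply/eqP; rewrite eqn_leq mxrankM_maxr /=.
by have := mxrankS (submxMr A E_full); rewrite mul1mx.
Qed.

End LinearMaps.

Section LeftInvertible.
Variables (F : fieldType) (p r s : nat) (L : 'M[F]_(p, r)) (L' : 'M[F]_(r, p)).
Hypothesis L'L : L' *m L = 1%:M.

Lemma mulmx_linv_eq0 (w : 'M[F]_(r, s)) : (L *m w == 0) = (w == 0).
Proof.
apply/eqP/eqP => [Lw0|->]; last by rewrite mulmx0.
by rewrite -(mul1mx w) -L'L -mulmxA Lw0 mulmx0.
Qed.

Lemma mxrank_mul_linv (w : 'M[F]_(r, s)) : \rank (L *m w) = \rank w.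
Proof.
apply/eqP; rewrite eqn_leq mxrankM_maxr /=.
by have := mxrankM_maxr L' (L *m w); rewrite mulmxA L'L mul1mx.
Qed.

End LeftInvertible.

Lemma pid_mx_linv (R : pzRingType) n m : (m <= n)%N ->
  (pid_mx m : 'M[R]_(m, n)) *m (pid_mx m : 'M_(n, m)) = 1%:M.
Proof. by move=> le_mn; rewrite mul_pid_mx !minnn (minn_idPr le_mn) pid_mx_1. Qed.

Section KernelPair.
Variables (m : nat) (y0 : bv m) (j : 'I_m).
Hypothesis y0j : y0 0 j = 1.

(* [kill_mx *m y^T = y^T - y_j y0^T], and over F_2 the coefficient y_j is 0 or 1. *)
Definition kill_mx : 'M['F_2]_m := 1%:M - y0^T *m delta_mx 0 j.

Lemma kill_mx_ker (y : bv m) : (kill_mx *m y^T == 0) = (y == 0) || (y == y0).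
Proof.
rewrite mulmxBl mul1mx -mulmxA [delta_mx 0 j *m _]mx11_scalar -rowE !mxE.
rewrite mul_mx_scalar subr_eq0.
case/orP: (F2_eq0Veq1 (y 0 j)) => /eqP yj; rewrite yj ?scale0r ?scale1r.
  rewrite trmx_eq0; have [y_y0 | _] := eqVneq y y0; last by rewrite orbF.
  by move/eqP: yj; rewrite y_y0 y0j oner_eq0.
rewrite (inj_eq (@trmx_inj _ _ _)); have [y_0 | //] := eqVneq y 0.
by move/eqP: yj; rewrite y_0 mxE eq_sym oner_eq0.
Qed.

Lemma rank_kill_mx : \rank kill_mx = m.-1.
Proof.
have y0_neq0 : y0 != 0.
  by apply/eqP => y0_0; move/eqP: y0j; rewrite y0_0 mxE eq_sym oner_eq0.
have ker u : (u *m kill_mx^T == 0) = (u == 0) || (u == y0).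
  by rewrite -kill_mx_ker -trmx_eq0 trmx_mul trmxK.
have ker_line : (kermx kill_mx^T :=: y0)%MS.
  apply/eqmxP; rewrite sub_kermx ker eqxx orbT andbT.
  apply/row_subP => i; have := mulmx_ker kill_mx^T; move/(congr1 (row i)).
  rewrite row_mul row0 => /eqP; rewrite ker => /orP[] /eqP ->.
    exact: sub0mx.
  exact: submx_refl.
have := mxrank_ker kill_mx^T; rewrite ker_line rank_rV y0_neq0 mxrank_tr.
by have := rank_leq_row kill_mx; lia.
Qed.

End KernelPair.

Lemma size_transcript m (q : seq (bv m * bool) -> bv m) O k :
  size (transcript q O k) = k.
Proof. by elim: k => //= k IH; rewrite size_rcons IH. Qed.

Lemma eq_transcript m (q : seq (bv m * bool) -> bv m) O1 O2 k :
  {in map fst (transcript q O1 k), O1 =1 O2} ->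
  transcript q O1 k = transcript q O2 k.
Proof.
elim: k => //= k IH O12; rewrite map_rcons in O12.
rewrite -IH => [|y qy]; last by apply: O12; rewrite mem_rcons inE qy orbT.
by rewrite O12 // mem_rcons mem_head.
Qed.

Lemma exists_nonzero_notin m (s : seq (bv m)) : ((size s).+1 < 2 ^ m)%N ->
  exists2 y, y != 0 & y \notin s.
Proof.
move=> small_s; suff [y] : exists y, y \notin 0 :: s.
  by rewrite inE negb_or => /andP[]; exists y.
apply/existsP; rewrite -negb_forall; apply/forallP => all_in.
have : (#|[set: bv m]| <= (size s).+1)%N.
  apply: leq_trans (card_size (0 :: s)).
  by apply/subset_leq_card/subsetP => y _; apply: all_in.
by rewrite cardsT card_mx card_Fp // mul1n; lia.
Qed.

Theorem mainTheorem11 (m n : nat) (hm : (1 <= m)%N) (hmn : (m <= n)%N)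
  (q : seq (bv m * bool) -> bv m) (k : nat) (hk : (k <= 2 ^ m - 2)%N) :
  exists (f g : bv n -> bv m),
    [/\ fully_balanced f, fully_balanced g,
        dim_img f = m, dim_img g = m.-1 &
        transcript q (fun y => y \in Cset f) k =
        transcript q (fun y => y \in Cset g) k].
Proof.
pose B : 'M['F_2]_(n, m) := pid_mx m; have B_linv := pid_mx_linv 'F_2 hmn.
pose f : bv n -> bv m := mulmxr B.
have Cf y : (y \in Cset f) = (y == 0).
  by rewrite Cset_mulmxr (mulmx_linv_eq0 B_linv) trmx_eq0.
have [y0 y0_neq0 y0_unasked] :
    exists2 y0, y0 != 0 & y0 \notin map fst (transcript q (fun y => y \in Cset f) k).
  apply: exists_nonzero_notin; rewrite size_map size_transcript.
  have two_le : (2 <= 2 ^ m)%N by rewrite -{1}(expn1 2) leq_exp2l.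
  by rewrite -add2n -leq_subRL.
have [i [j y0j]] := mx_F2_neq0 y0_neq0; rewrite (ord1 i) in y0j.
pose g : bv n -> bv m := mulmxr (B *m kill_mx y0 j).
have Cg y : (y \in Cset g) = (y == 0) || (y == y0).
  by rewrite Cset_mulmxr -mulmxA (mulmx_linv_eq0 B_linv) kill_mx_ker.
exists f, g; split.
- exact: fully_balanced_mulmxr.
- exact: fully_balanced_mulmxr.
- by rewrite dim_img_mulmxr rank_pid_mx.
- by rewrite dim_img_mulmxr (mxrank_mul_linv B_linv) rank_kill_mx.
clearbody f g; apply: eq_transcript => y y_asked; rewrite Cf Cg.
have [y_y0 | _] := eqVneq y y0; last by rewrite orbF.
by move: y0_unasked; rewrite -y_y0 y_asked.
Qed.
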